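(* For every integer $d\ge 1$, the $d$-dimensional hypercube $Q_d$ satisfies $\sigma_T(Q_d)=2d-1$.
   Context: $Q_d=K_2\times\cdots\times K_2$ ($d$ factors) is the graph whose vertices are the 0-1 vectors of length $d$, two vertices adjacent iff they differ in exactly one coordinate. For a spanning tree $T$ of a connected graph $G$, $d_T(u,v)$ is the distance between $u$ and $v$ in $T$, $\sigma_T(G,T):=\max_{uv\in E(G)} d_T(u,v)$, and the tree-stretch is $\sigma_T(G):=\min\{\sigma_T(G,T): T \text{ a spanning tree of } G\}$. *)

From mathcomp Require Import all_boot.
Set Implicit Arguments. Unset Strict Implicit. Unset Printing Implicit Defensive.

(* A simple graph on a finite vertex type T is a symmetric irreflexive
   relation. *)

Definition hypercube_vertex (d : nat) := d.-tuple bool.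
Definition hypercube_adj (d : nat) : rel (d.-tuple bool) :=
  fun u v => #|[set i : 'I_d | tnth u i != tnth v i]| == 1.

Definition walk_of_len (T : finType) (e : rel T) (n : nat) (u v : T) : bool :=
  [exists p : n.-tuple T, path e u p && (last u p == v)].

(* graph distance: least n with a walk of length n (walks of length
   <= #|T| suffice); set to #|T| if no walk exists (never used for
   connected graphs) *)
Definition gdist (T : finType) (e : rel T) (u v : T) : nat :=
  find (fun n => walk_of_len e n u v) (iota 0 #|T|).

Definition connected_graph (T : finType) (e : rel T) : Prop :=
  forall u v : T, connect e u v.

Definition acyclic (T : finType) (e : rel T) : Prop :=
  forall c : seq T, uniq c -> 3 <= size c -> ~~ cycle e c.

Definition spanning_tree (T : finType) (g t : rel T) : Prop :=
  [/\ symmetric t, subrel t g, connected_graph t & acyclic t].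

Definition stretch (T : finType) (g t : rel T) : nat :=
  \max_(p : T * T | g p.1 p.2) gdist t p.1 p.2.

Definition is_tree_stretch (T : finType) (g : rel T) (k : nat) : Prop :=
  (exists t : rel T, spanning_tree g t /\ stretch g t = k) /\
  (forall t : rel T, spanning_tree g t -> k <= stretch g t).

From mathcomp Require Import all_boot zify.
Set Implicit Arguments. Unset Strict Implicit. Unset Printing Implicit Defensive.

(* Lower bound: in any spanning tree of Q_d, moving along tree edges towards
   the antipodes yields a tree edge ab whose removal leaves the antipode of a
   on b's side and the antipode of b on a's side.  The antipodes of b and a
   are adjacent in Q_d, and every tree walk between them crosses ab, so it has
   length at least ham(~b, a) + 1 + ham(b, ~a) = (d - 1) + 1 + (d - 1).
   Upper bound: join every nonzero vertex to the vertex obtained by clearing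
   its first 1; the tree walk between u and v through 0 has length
   |u| + |v|, which is at most 2d - 1 when u and v are adjacent. *)

Definition walk (T : Type) (e : rel T) (n : nat) (x y : T) : Prop :=
  exists p, [/\ size p = n, path e x p & last x p = y].

Section Walks.
Variables (T : finType) (e : rel T).

Lemma walk0 x : walk e 0 x x.
Proof. by exists [::]. Qed.

Lemma walk1 x y : e x y -> walk e 1 x y.
Proof. by exists [:: y]; rewrite /= andbT. Qed.

Lemma walk_cat m n x y z : walk e m x y -> walk e n y z -> walk e (m + n) x z.
Proof.
move=> [p [sp pp lp]] [q [sq pq lq]]; exists (p ++ q).
by rewrite size_cat cat_path last_cat lp sp sq pp pq.
Qed.

Lemma walk_sym n x y : symmetric e -> walk e n x y -> walk e n y x.
Proof.
move=> sym_e; elim: n x => [|n IH] x [[|z q] [//= sq pq lq]].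
  by rewrite -lq; apply: walk0.
case/andP: pq => exz pq; case: sq => sq.
rewrite -addn1; apply: (walk_cat (IH z _) (walk1 _)); first by exists q.
by rewrite sym_e.
Qed.

Lemma walk_connect n x y : walk e n x y -> connect e x y.
Proof. by case=> p [_ pp <-]; apply/connectP; exists p. Qed.

Lemma walk_of_lenP n x y : walk e n x y -> walk_of_len e n x y.
Proof.
case=> p [sp pp lp]; apply/existsP.
have sp' : size p == n by rewrite sp.
by exists (Tuple sp'); rewrite /= pp lp eqxx.
Qed.

Lemma gdist_ub n x y : walk_of_len e n x y -> gdist e x y <= n.
Proof.
move=> wn; rewrite /gdist; case: (ltnP n #|T|) => [nT|Tn].
  rewrite leqNgt; apply/negP => /(before_find 0).
  by rewrite nth_iota ?size_iota // add0n wn.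
by apply: leq_trans (find_size _ _) _; rewrite size_iota.
Qed.

Lemma gdist_lb k x y :
  k <= #|T| -> (forall n, walk_of_len e n x y -> k <= n) -> k <= gdist e x y.
Proof.
move=> kT walk_ge; rewrite /gdist; set P := fun n => walk_of_len e n x y.
case: (ltnP (find P (iota 0 #|T|)) (size (iota 0 #|T|))) => h.
  have := @nth_find _ 0 P (iota 0 #|T|); rewrite has_find => /(_ h).
  by rewrite nth_iota ?add0n; [apply: walk_ge | rewrite size_iota in h].
by apply: leq_trans h; rewrite size_iota.
Qed.

End Walks.

Definition same_edge (T : eqType) (a b u v : T) : bool :=
  ((u == a) && (v == b)) || ((u == b) && (v == a)).

Definition cut_edge (T : finType) (t : rel T) (a b : T) : rel T :=
  fun u v => t u v && ~~ same_edge a b u v.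

Section CutEdge.
Variables (T : finType) (t : rel T).
Hypotheses (sym_t : symmetric t) (irr_t : irreflexive t).
Hypotheses (acyclic_t : acyclic t) (conn_t : connected_graph t).

Lemma cut_edgeC a b : cut_edge t a b =2 cut_edge t b a.
Proof. by move=> u v; rewrite /cut_edge /same_edge orbC. Qed.

Lemma cut_edge_sub a b : subrel (cut_edge t a b) t.
Proof. by move=> u v /andP []. Qed.

Lemma cut_edge_sym a b : symmetric (cut_edge t a b).
Proof.
move=> u v; rewrite /cut_edge sym_t /same_edge orbC.
by congr (_ && ~~ (_ || _)); apply: andbC.
Qed.

Lemma cut_edge_disconnects a b : t a b -> ~~ connect (cut_edge t a b) a b.
Proof.
move=> tab; apply/negP => /connectP [p pE lastb].
move: lastb; case: (shortenP pE) => p' pE' up' _ lastb.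
have size_cycle : 3 <= size (a :: p').
  case: p' pE' up' lastb => [|y [|z q]] //= pE' _ lastb.
  - by move: (irr_t a); rewrite -{2}lastb tab.
  - by move: pE'; rewrite /cut_edge /same_edge -lastb !eqxx /= andbF.
move/negP: (acyclic_t up' size_cycle); apply.
by rewrite /= rcons_path (sub_path (@cut_edge_sub a b) pE') /= -lastb sym_t.
Qed.

Lemma cut_edge_side a b x :
  connect (cut_edge t a b) a x || connect (cut_edge t a b) b x.
Proof.
set side := fun y => connect (cut_edge t a b) a y || connect (cut_edge t a b) b y.
suff side_path p y : side y -> path t y p -> side (last y p).
  by have /connectP [p pt ->] := conn_t a x; apply: side_path pt; rewrite /side connect0.
elim: p y => [|z q IH] y //= side_y /andP [tyz pq]; apply: IH pq.
case cut_yz: (cut_edge t a b y z).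
  by case/orP: side_y => H; apply/orP; [left|right]; apply: connect_trans H (connect1 cut_yz).
move: cut_yz; rewrite /cut_edge tyz /= => /negbFE /orP [] /andP [_ /eqP ->];
  by rewrite /side connect0 ?orbT.
Qed.

Lemma cut_edge_crossing a b u v :
  connect (cut_edge t a b) a u -> t u v -> ~~ connect (cut_edge t a b) a v ->
  u = a /\ v = b.
Proof.
move=> au tuv; case cut_uv: (cut_edge t a b u v).
  by rewrite (connect_trans au (connect1 cut_uv)).
move: cut_uv; rewrite /cut_edge tuv /= => /negbFE /orP [] /andP [/eqP -> /eqP ->] //.
by rewrite connect0.
Qed.

(* Shortening a walk from b to w makes b appear only once, so the walk
   never uses an edge at b again after its first step bc. *)
Lemma connect_first_edge (R : rel T) b w :
  subrel R t -> connect R b w -> w != b ->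
  exists c, R b c /\ connect (cut_edge t b c) c w.
Proof.
move=> subR /connectP [p pR ->]; case: (shortenP pR) => p' pR' up' _.
case: p' pR' up' => [|c q] /=; first by rewrite eqxx.
move=> /andP [Rbc pq] /andP [b_notin uq] _; exists c; split => //.
apply/connectP; exists q => //.
suff avoid_b r y : path R y r -> b \notin y :: r -> path (cut_edge t b c) y r.
  exact: avoid_b.
elim: r y => [|z r IH] y //= /andP [Ryz pr].
rewrite !in_cons => /norP [ny /norP [nz nr]].
rewrite {1}/cut_edge (subR _ _ Ryz) {1}/same_edge.
rewrite (eq_sym y) (negbTE ny) (eq_sym z b) (negbTE nz) andbF /=.
by apply: IH pr _; rewrite in_cons negb_or nz.
Qed.

Lemma cut_edge_side_shrinks a b c x :
  cut_edge t a b b c -> connect (cut_edge t b c) c x ->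
  connect (cut_edge t a b) b x.
Proof.
move=> cut_bc /connectP [p pE ->].
have tbc : t b c by case/andP: cut_bc.
have c_not_b : ~~ connect (cut_edge t b c) c b.
  by rewrite -(eq_connect (cut_edgeC c b)); apply: cut_edge_disconnects; rewrite sym_t.
suff side_path q y : connect (cut_edge t b c) c y ->
    connect (cut_edge t a b) b y -> path (cut_edge t b c) y q ->
    connect (cut_edge t a b) b (last y q).
  by apply: side_path pE; [apply: connect0 | apply: connect1].
elim: q y => [|z q IH] y //= cy by_ /andP [cut_yz pq].
have cz := connect_trans cy (connect1 cut_yz).
apply: IH pq => //; have tyz : t y z by case/andP: cut_yz.
case cut_ab: (cut_edge t a b y z); first exact: connect_trans by_ (connect1 cut_ab).
move: cut_ab; rewrite /cut_edge tyz /= => /negbFE /orP [] /andP [/eqP ey /eqP ez].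
  by rewrite ez in cz; rewrite cz in c_not_b.
by rewrite ey in cy; rewrite cy in c_not_b.
Qed.

(* The side of b shrinks strictly at each step, which makes the search end. *)
Lemma exists_swapping_edge (f : T -> T) (x0 : T) :
  (forall x, f x != x) ->
  exists a b, [/\ t a b, connect (cut_edge t a b) b (f a)
                       & connect (cut_edge t a b) a (f b)].
Proof.
move=> f_neq.
pose side a b := [set x | connect (cut_edge t a b) b x].
suff search n a b : t a b -> connect (cut_edge t a b) b (f a) ->
    #|side a b| <= n ->
    exists a b, [/\ t a b, connect (cut_edge t a b) b (f a)
                         & connect (cut_edge t a b) a (f b)].
  have [c [tc cfx]] :=
    connect_first_edge (fun _ _ h => h) (conn_t x0 (f x0)) (f_neq x0).
  exact: search tc cfx (leqnn _).
elim: n a b => [|n IH] a b tab bfa; first by rewrite (cardsD1 b) inE connect0.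
move=> side_le.
have [afb|/negbTE afb] := boolP (connect (cut_edge t a b) a (f b)).
  by exists a, b.
have bfb : connect (cut_edge t a b) b (f b).
  by have := cut_edge_side a b (f b); rewrite afb.
have [c [cut_bc cfb]] := connect_first_edge (@cut_edge_sub a b) bfb (f_neq b).
have tbc : t b c by case/andP: cut_bc.
apply: (IH b c tbc cfb); rewrite -ltnS; apply: leq_trans side_le.
apply: proper_card; apply/properP; split.
  by apply/subsetP => x; rewrite !inE; apply: cut_edge_side_shrinks.
exists b; rewrite !inE ?connect0 //.
by rewrite -(eq_connect (cut_edgeC c b)); apply: cut_edge_disconnects; rewrite sym_t.
Qed.

End CutEdge.

Lemma leq_mul2n_exp2 n : 2 * n <= 2 ^ n.
Proof.
elim: n => [|n IH] //; have := expn_gt0 2 n; rewrite expnS.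
move: IH; move: (2 ^ n) => X; lia.
Qed.

Section HypercubeLowerBound.
Variable d : nat.
Local Notation vertex := (d.-tuple bool).

Definition ham (u v : vertex) : nat := #|[set i : 'I_d | tnth u i != tnth v i]|.

Definition antipode (v : vertex) : vertex := [tuple ~~ tnth v i | i < d].

Lemma hypercube_adjE (u v : vertex) : hypercube_adj u v = (ham u v == 1).
Proof. by []. Qed.

Lemma ham_triangle (u v w : vertex) : ham u w <= ham u v + ham v w.
Proof.
apply: leq_trans (leq_card_setU _ _); apply: subset_leq_card.
by apply/subsetP => i; rewrite !inE; case: (tnth u i); case: (tnth v i); case: (tnth w i).
Qed.

Lemma hamC (u v : vertex) : ham u v = ham v u.
Proof. by apply: eq_card => i; rewrite !inE eq_sym. Qed.

Lemma hamxx (u : vertex) : ham u u = 0.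
Proof. by apply/eqP; rewrite cards_eq0; apply/eqP/setP => i; rewrite !inE eqxx. Qed.

Lemma ham_antipode (u v : vertex) : ham (antipode u) v = d - ham u v.
Proof.
have := cardsC [set i : 'I_d | tnth u i != tnth v i]; rewrite card_ord => <-.
rewrite addKn; apply: eq_card => i.
by rewrite !inE tnth_mktuple; case: (tnth u i); case: (tnth v i).
Qed.

Lemma hypercube_adj_antipode (u v : vertex) :
  hypercube_adj (antipode u) (antipode v) = hypercube_adj u v.
Proof.
rewrite !hypercube_adjE; congr (_ == 1); apply: eq_card => i.
by rewrite !inE !tnth_mktuple; case: (tnth u i); case: (tnth v i).
Qed.

Lemma antipode_neq (v : vertex) : 0 < d -> antipode v != v.
Proof.
move=> d_gt0; apply/eqP => /(congr1 (fun w => tnth w (Ordinal d_gt0))).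
by rewrite tnth_mktuple; case: (tnth v _).
Qed.

Lemma ham_path (x : vertex) p :
  path (@hypercube_adj d) x p -> ham x (last x p) <= size p.
Proof.
elim: p x => [|y q IH] x /=; first by rewrite hamxx.
case/andP => adj_xy pq; apply: leq_trans (ham_triangle x y _) _.
have /eqP hxy : ham x y == 1 := adj_xy.
by rewrite hxy add1n ltnS IH.
Qed.

(* A walk leaving the side of a in the tree minus ab must cross ab itself. *)
Lemma ham_cut_crossing (t : rel vertex) a b p x :
  subrel t (@hypercube_adj d) -> connect (cut_edge t a b) a x -> path t x p ->
  ~~ connect (cut_edge t a b) a (last x p) ->
  ham x a + 1 + ham b (last x p) <= size p.
Proof.
move=> sub_t; elim: p x => [|y q IH] x /=; first by move=> ->.
move=> ax /andP [txy pq] not_a_last.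
have [ay|not_ay] := boolP (connect (cut_edge t a b) a y).
  have hxy : ham x y = 1 by apply/eqP; apply: sub_t.
  have := IH y ay pq not_a_last; have := ham_triangle x y a; rewrite hxy.
  by move: (ham x a) (ham y a) (ham b _) => A B C; lia.
have [ex ey] := cut_edge_crossing ax txy not_ay; subst x y.
by rewrite hamxx add0n add1n ltnS ham_path // (sub_path sub_t pq).
Qed.

Lemma hypercube_stretch_ge (t : rel vertex) :
  0 < d -> spanning_tree (@hypercube_adj d) t ->
  2 * d - 1 <= stretch (@hypercube_adj d) t.
Proof.
move=> d_gt0 [sym_t sub_t conn_t acyclic_t].
have irr_t : irreflexive t.
  by move=> x; apply/negbTE/negP => /sub_t; rewrite hypercube_adjE hamxx.
have [a [b [tab b_side a_side]]] := exists_swapping_edge sym_t irr_t acyclic_t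
  conn_t (nseq_tuple d false) (fun v => antipode_neq v d_gt0).
have adj_ba : hypercube_adj (antipode b) (antipode a).
  by rewrite hypercube_adj_antipode sub_t // sym_t.
apply: leq_trans (@leq_bigmax_cond _ (fun p => hypercube_adj p.1 p.2)
  (fun p => gdist t p.1 p.2) (antipode b, antipode a) adj_ba).
apply: gdist_lb => [|n /existsP [p /andP [tp /eqP last_p]]].
  by rewrite card_tuple card_bool; apply: leq_trans (leq_mul2n_exp2 d); lia.
have not_a_side : ~~ connect (cut_edge t a b) a (antipode a).
  apply: contra (cut_edge_disconnects sym_t irr_t acyclic_t tab) => a_anti.
  by apply: connect_trans a_anti _; rewrite (sym_connect_sym (cut_edge_sym sym_t a b)).
have := ham_cut_crossing sub_t a_side tp; rewrite last_p size_tuple => /(_ not_a_side).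
have /eqP hab : ham a b == 1 := sub_t _ _ tab.
by rewrite /= (ham_antipode b a) (hamC b (antipode a)) (ham_antipode a b) (hamC b a) hab; lia.
Qed.

End HypercubeLowerBound.

Section HypercubeTree.
Variable d : nat.
Local Notation vertex := (d.-tuple bool).
Local Notation zero := (nseq_tuple d false).

Definition flip (v : vertex) (i : 'I_d) : vertex :=
  [tuple if j == i then ~~ tnth v j else tnth v j | j < d].

Definition weight (v : vertex) : nat := #|[set i | tnth v i]|.

Definition parent (u v : vertex) : bool :=
  if [pick i | tnth u i] is Some i then v == flip u i else false.

Definition hypercube_tree : rel vertex := fun u v => parent u v || parent v u.

Lemma weight_flip (u : vertex) i : tnth u i -> weight u = (weight (flip u i)).+1.
Proof.
move=> ui; rewrite /weight (cardsD1 i) inE ui add1n; congr _.+1; apply: eq_card => j.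
by rewrite !inE tnth_mktuple; case: (j =P i) => [->|]; rewrite ?ui.
Qed.

Lemma weight_zero : weight zero = 0.
Proof. by apply/eqP; rewrite cards_eq0; apply/eqP/setP => j; rewrite !inE tnth_nseq. Qed.

Lemma hypercube_adj_flip (u : vertex) i : hypercube_adj u (flip u i).
Proof.
apply/cards1P; exists i; apply/setP => j.
rewrite !inE tnth_mktuple; case: (j =P i) => _ /=; last by rewrite eqxx.
by case: (tnth u j).
Qed.

Lemma hypercube_adj_sym : symmetric (@hypercube_adj d).
Proof. by move=> u v; congr (_ == 1); apply: eq_card => j; rewrite !inE eq_sym. Qed.

Lemma parentP (u v : vertex) : parent u v -> exists2 i, tnth u i & v = flip u i.
Proof. by rewrite /parent; case: pickP => [i ui /eqP ->|] //; exists i. Qed.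

Lemma parent_fun (u v w : vertex) : parent u v -> parent u w -> v = w.
Proof. by rewrite /parent; case: pickP => [i _ /eqP -> /eqP ->|]. Qed.

Lemma parent_exists (u : vertex) : u != zero -> exists v, parent u v.
Proof.
rewrite /parent; case: pickP => [i _ _|none]; first by exists (flip u i).
case/eqP; apply: eq_from_tnth => j; rewrite tnth_nseq.
by have := none j; case: (tnth u j).
Qed.

Lemma hypercube_tree_sym : symmetric hypercube_tree.
Proof. by move=> u v; rewrite /hypercube_tree orbC. Qed.

Lemma hypercube_tree_sub : subrel hypercube_tree (@hypercube_adj d).
Proof.
move=> u v /orP [] /parentP [i _ ->]; first exact: hypercube_adj_flip.
by rewrite hypercube_adj_sym hypercube_adj_flip.
Qed.

Lemma walk_to_zero (v : vertex) : walk hypercube_tree (weight v) v zero.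
Proof.
suff walk_n n : weight v = n -> walk hypercube_tree n v zero by apply: walk_n.
elim: n v => [|n IH] v wv.
  have [->|/parent_exists [w /parentP [i vi _]]] := eqVneq v zero; first exact: walk0.
  by move: wv; rewrite (weight_flip vi).
have [ez|/parent_exists [w vw]] := eqVneq v zero; first by move: wv; rewrite ez weight_zero.
have [i vi ew] := parentP vw.
rewrite -add1n; apply: (walk_cat (walk1 _) (IH w _)); first by rewrite /hypercube_tree vw.
by move: wv; rewrite (weight_flip vi) -ew => [[]].
Qed.

Lemma hypercube_tree_walk (u v : vertex) :
  walk hypercube_tree (weight u + weight v) u v.
Proof. exact: walk_cat (walk_to_zero u) (walk_sym hypercube_tree_sym (walk_to_zero v)). Qed.

Lemma parent_of_lighter (u v : vertex) :
  hypercube_tree u v -> weight v <= weight u -> parent u v.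
Proof. by case/orP => // /parentP [i vi ->]; rewrite (weight_flip vi) ltnn. Qed.

(* A vertex of maximal weight on a cycle would have both cycle neighbours as
   its parent. *)
Lemma hypercube_tree_acyclic : acyclic hypercube_tree.
Proof.
move=> [|x0 c0] // uc sc; apply/negP => cyc.
have [x xc xmax] := @arg_maxnP _ x0 (fun x => x \in x0 :: c0) weight (mem_head x0 c0).
case: (rot_to xc) => i s e.
have us : uniq (x :: s) by rewrite -e rot_uniq.
have cs : cycle hypercube_tree (x :: s) by rewrite -e rot_cycle.
have ss : 3 <= size (x :: s) by rewrite -e size_rot.
have ms y : y \in s -> weight y <= weight x.
  by move=> ys; apply: xmax; rewrite -(mem_rot i) e in_cons ys orbT.
case: s e us cs ss ms => [|y s2] // e; case/lastP: s2 e => [|s3 z] // e us cs ss ms.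
move: cs; rewrite /= rcons_path last_rcons => /andP [xy /andP [_ zx]].
move: us; rewrite /= => /andP [_ /andP [y_notin _]].
have yz : y != z by apply: contraNneq y_notin => ->; rewrite mem_rcons mem_head.
have pxy : parent x y by apply: parent_of_lighter xy (ms y _); rewrite mem_head.
have pxz : parent x z.
  apply: parent_of_lighter; first by rewrite hypercube_tree_sym.
  by apply: ms; rewrite in_cons mem_rcons mem_head orbT.
by move: yz; rewrite (parent_fun pxy pxz) eqxx.
Qed.

Lemma hypercube_tree_spanning : spanning_tree (@hypercube_adj d) hypercube_tree.
Proof.
split; [exact: hypercube_tree_sym | exact: hypercube_tree_sub | | exact: hypercube_tree_acyclic].
by move=> u v; apply: walk_connect (hypercube_tree_walk u v).
Qed.

Lemma weight_adj_le (u v : vertex) :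
  hypercube_adj u v -> weight u + weight v <= 2 * d - 1.
Proof.
move/cards1P => [i Di].
have : i \in [set i0 | tnth u i0 != tnth v i0] by rewrite Di set11.
rewrite inE => uv.
have weight_le w : weight w <= d by apply: leq_trans (max_card _) _; rewrite card_ord.
have weight_lt w : ~~ tnth w i -> weight w < d.
  move=> wi; rewrite -[d in _ < d]card_ord -cardsT (cardsD1 i) in_setT add1n ltnS.
  apply: subset_leq_card; apply/subsetP => j; rewrite !inE andbT.
  by apply: contraTneq => ->.
have := weight_le u; have := weight_le v.
case eu: (tnth u i) uv; case ev: (tnth v i) => // _.
  by have := weight_lt v (negbT ev); lia.
by have := weight_lt u (negbT eu); lia.
Qed.

Lemma hypercube_tree_stretch_le :
  stretch (@hypercube_adj d) hypercube_tree <= 2 * d - 1.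
Proof.
apply/bigmax_leqP => [[u v]] /= adj_uv; apply: leq_trans (weight_adj_le adj_uv).
exact/gdist_ub/walk_of_lenP/hypercube_tree_walk.
Qed.

End HypercubeTree.

Theorem corollary3p3 (d : nat) :
  1 <= d -> is_tree_stretch (@hypercube_adj d) (2 * d - 1).
Proof.
move=> d_gt0; split; last by move=> t; apply: hypercube_stretch_ge.
exists (@hypercube_tree d); split; first exact: hypercube_tree_spanning.
by apply/eqP; rewrite eqn_leq hypercube_tree_stretch_le hypercube_stretch_ge //;
  apply: hypercube_tree_spanning.
Qed.
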